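(* Let $D$ denote the set of variable network games $(v,\rho)\in\mathbb V^N\times\mathbb P^N$ such that $v$ is component additive. Then: (i) the Expected Myerson Value $\Psi^m$ is an allocation rule on the class of variable network games which, on $D$, satisfies component balance and the equal bargaining power property; and (ii) if $\Psi\colon\mathbb V^N\times\mathbb P^N\to\mathbb R^N$ is any allocation rule on the class of variable network games satisfying component balance and the equal bargaining power property for all $(v,\rho)\in D$, then $\Psi(v,\rho)=\Psi^m(v,\rho)$ for all $(v,\rho)\in D$. That is, $\Psi^m$ is the unique allocation rule on the class of component additive variable network games that satisfies component balance and the equal bargaining power property.
   Context: $N=\{1,\dots,n\}$ is a finite player set. A link is an unordered pair $ij=\{i,j\}$ of distinct players; $g_N$ is the set of all links; a network is any $g\subseteq g_N$; $\mathbb G^N$ is the set of all networks and $g_0=\varnothing$. For $g\in\mathbb G^N$: $N_i(g)=\{j\ne i: ij\in g\}$, $N(g)=\bigcup_i N_i(g)$ (players with at least one link in $g$), and $N_0(g)=N\setminus N(g)$ (isolated players). For $S\subseteq N$, $g|S=\{ij\in g: i,j\in S\}$. $g+ij=g\cup\{ij\}$, $g-ij=g\setminus\{ij\}$. A component of $g$ is a nonempty subnetwork $h\subseteq g$ that is connected (any two players of $N(h)$ are joined by a path in $h$) and maximal (if $i\in N(h)$ and $ij\in g$ then $ij\in h$); $C(g)$ is the set of components of $g$. A network formation probability distribution is a map $\rho\colon\mathbb G^N\to[0,1]$ with $\sum_{g}\rho(g)=1$; $\mathbb P^N$ is the set of these. $\mathbb G(\rho)=\{g:\rho(g)>0\}$,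 and the extent is $g(\rho)=\bigcup_{g\in\mathbb G(\rho)}g$. For a network $g$, the restriction $\rho_g\in\mathbb P^N$ is $\rho_g(h)=\sum_{h'\subseteq g_N\setminus g}\rho(h\cup h')$ if $h\subseteq g$ and $\rho_g(h)=0$ otherwise. For a link $ij$, $\rho^{-ij}=\rho_{g_N-ij}$. A network game is $v\colon\mathbb G^N\to\mathbb R$ with $v(\varnothing)=0$; $\mathbb V^N$ is the set of these. $v$ is component additive if $v(g)=\sum_{h\in C(g)}v(h)$ for all $g$. A variable network game is a pair $(v,\rho)\in\mathbb V^N\times\mathbb P^N$. An allocation rule on the class of variable network games is a map $\Psi\colon\mathbb V^N\times\mathbb P^N\to\mathbb R^N$ with $\Psi_i(v,\rho)=0$ for every $i\in N_0(g(\rho))$. It is component balanced (on $(v,\rho)$ with $v$ component additive) if for every component $h\in C(g(\rho))$: $\sum_{i\in N(h)}\Psi_i(v,\rho)=\sum_{g\in\mathbb G(\rho)}\rho(g)\,v(g\cap h)$. It satisfies the equal bargaining power property if for every link $ij\in g(\rho)$: $\Psi_i(v,\rho)-\Psi_i(v,\rho^{-ij})=\Psi_j(v,\rho)-\Psi_j(v,\rho^{-ij})$. The Myerson Value for network games is $Y^m_i(v,g)=\sum_{S\subseteq N\setminus\{i\}}\frac{\#S!\,(n-\#S-1)!}{n!}\,[v(g|(S\cup\{i\}))-v(g|S)]$. The Expected Myerson Value is $\Psi^m(v,\rho)=\sum_{g\in\mathbb G^N}\rho(g)\,Y^m(v,g)$. *)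

From HB Require Import structures.
From mathcomp Require Import all_boot all_order all_algebra.
From mathcomp Require Import reals.
Set Implicit Arguments. Unset Strict Implicit. Unset Printing Implicit Defensive.
Import Order.TTheory GRing.Theory Num.Theory.
Local Open Scope ring_scope.

(* Players: N = 'I_n.  A link is an unordered pair of distinct players,
   i.e. a 2-element subset of 'I_n. *)
Definition link (n : nat) := {l : {set 'I_n} | #|l| == 2%N}.
Definition network (n : nat) := {set link n}.

Section Defs.
Variable n : nat.
Variable R : realType.

Definition Nplayers (g : network n) : {set 'I_n} := \bigcup_(l in g) val l.
Definition N0 (g : network n) : {set 'I_n} := ~: Nplayers g.

Definition restrS (g : network n) (S : {set 'I_n}) : network n :=
  [set l in g | val l \subset S].

Definition adj (h : network n) : rel 'I_n :=
  fun i j => [exists l in h, (i \in val l) && (j \in val l)].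

Definition is_component (g h : network n) : bool :=
  [&& h != set0, h \subset g,
      [forall i, forall j,
         (i \in Nplayers h) && (j \in Nplayers h) ==> connect (adj h) i j] &
      [forall i, forall l,
         [&& i \in Nplayers h, l \in g & i \in val l] ==> (l \in h)]].

Definition components (g : network n) : {set network n} :=
  [set h | is_component g h].

Definition is_game (v : network n -> R) : Prop := v set0 = 0.

Definition component_additive (v : network n -> R) : Prop :=
  forall g, v g = \sum_(h in components g) v h.

Definition is_prob (rho : network n -> R) : Prop :=
  (forall g, 0 <= rho g) /\ \sum_(g : network n) rho g = 1.

Definition extent (rho : network n -> R) : network n :=
  \bigcup_(g : network n | 0 < rho g) g.

Definition restr_prob (g : network n) (rho : network n -> R) : network n -> R :=
  fun h => if h \subset g then
             \sum_(h' : network n | h' \subset ~: g) rho (h :|: h')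
           else 0.

Definition minus_link (l : link n) (rho : network n -> R) : network n -> R :=
  restr_prob (~: [set l]) rho.

Definition inD (v rho : network n -> R) : Prop :=
  [/\ is_game v, component_additive v & is_prob rho].

Definition alloc_type := (network n -> R) -> (network n -> R) -> 'I_n -> R.

Definition is_allocation_rule (Psi : alloc_type) : Prop :=
  forall v rho, is_game v -> is_prob rho ->
    forall i, i \in N0 (extent rho) -> Psi v rho i = 0.

Definition component_balanced_on (Psi : alloc_type) (v rho : network n -> R)
  : Prop :=
  forall h, h \in components (extent rho) ->
    \sum_(i in Nplayers h) Psi v rho i =
    \sum_(g : network n | 0 < rho g) rho g * v (g :&: h).

Definition equal_bargaining_on (Psi : alloc_type) (v rho : network n -> R)
  : Prop :=
  forall l, l \in extent rho -> forall i j, i \in val l -> j \in val l ->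
    Psi v rho i - Psi v (minus_link l rho) i =
    Psi v rho j - Psi v (minus_link l rho) j.

Definition myerson (v : network n -> R) (g : network n) (i : 'I_n) : R :=
  \sum_(S : {set 'I_n} | i \notin S)
     ((#|S|`! * (n - #|S| - 1)`!)%:R / (n`!)%:R) *
     (v (restrS g (i |: S)) - v (restrS g S)).

Definition exp_myerson : alloc_type :=
  fun v rho i => \sum_(g : network n) rho g * myerson v g i.

End Defs.

From mathcomp Require Import all_boot all_order all_algebra.
From mathcomp Require Import reals.
From mathcomp Require Import zify lra.
Import Order.TTheory GRing.Theory Num.Theory.
Local Open Scope ring_scope.
Set Implicit Arguments. Unset Strict Implicit. Unset Printing Implicit Defensive.

(* The Myerson value of [g] is the Shapley value of the coalitional game
   [S |-> v (g|S)], and the expected Myerson value is its [rho]-average.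
   Component balance then follows from efficiency of the Shapley value,
   applied to the part of [g] inside a component [h] (component additivity
   makes players outside [h] dummies for it).  Deleting a link [ij] only
   changes the worth of coalitions containing both [i] and [j], so the loss
   of [i] and of [j] is the same symmetric sum: equal bargaining power.
   Uniqueness goes by induction on the size of the extent: [rho^{-ij}] has a
   smaller extent, so two rules agree there; equal bargaining power then
   makes their difference constant along every link of [g(rho)], hence on
   every component, and component balance forces that constant to be 0. *)

Section SetSums.
Variables (V : nmodType) (T : finType).

Lemma sum_setU1 (x : T) (F : {set T} -> V) :
  \sum_(S : {set T} | x \notin S) F (x |: S) = \sum_(S : {set T} | x \in S) F S.
Proof.
rewrite [RHS](reindex_onto (fun S => x |: S) (fun S => S :\ x)); last first.
  by move=> S xS; rewrite setD1K.
apply: eq_bigl => S; rewrite setU11 /=.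
have [xS|xS] /= := boolP (x \in S); last by rewrite setU1K ?eqxx.
apply/esym/negbTE/eqP => E.
by have := setD11 x (x |: S); rewrite E xS.
Qed.

Lemma sum_subset1 (a : T) (F : {set T} -> V) :
  \sum_(S : {set T} | S \subset [set a]) F S = F set0 + F [set a].
Proof.
rewrite (bigD1 set0) ?sub0set //= (bigD1 [set a]) ?subxx //=; last first.
  by apply/set0Pn; exists a; rewrite inE.
rewrite big1 ?addr0 // => S /andP[/andP[]].
by rewrite subset1 => /orP[]/eqP->; rewrite eqxx // andbF.
Qed.

End SetSums.

Lemma sum_indicator_mul (R : pzSemiRingType) (T : finType) (a : T) (F : T -> R) :
  \sum_(x : T) (x == a)%:R * F x = F a.
Proof.
rewrite (bigD1 a) //= eqxx mul1r big1 ?addr0 // => x /negbTE ->.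
by rewrite mul0r.
Qed.

Section Shapley.
Variables (n : nat) (R : numFieldType).
Implicit Types (f : {set 'I_n} -> R) (i : 'I_n).

Definition shapley_weight (s : nat) : R := (s`! * (n - s - 1)`!)%:R / (n`!)%:R.

Definition shapley f i : R :=
  \sum_(S : {set 'I_n} | i \notin S) shapley_weight #|S| * (f (i |: S) - f S).

(* The weight of a coalition [T] summed over its [t] members (entering last)
   and over its [n - t] non-members (not entering) telescopes. *)
Lemma shapley_weight_telescope t : (t <= n)%N ->
  t%:R * shapley_weight t.-1 - (n - t)%:R * shapley_weight t =
  (t == n)%:R - (t == 0%N)%:R.
Proof.
move=> tn; rewrite /shapley_weight.
have nf : (n`!)%:R != 0 :> R by rewrite pnatr_eq0 -lt0n fact_gt0.
case: t tn => [|t] tn.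
  rewrite mul0r sub0r subn0 fact0 mul1n.
  case: n nf {tn} => [|m] nf; first by rewrite !mul0r oppr0 eqxx subrr.
  by rewrite subn1 /= mulrA -natrM -factS divff // sub0r.
case: (ltngtP t.+1 n) tn => // [ltn _|<- _]; last first.
  rewrite subnn mul0r !subr0 subSnn fact0 muln1 mulrA -natrM -factS divff //.
  by rewrite pnatr_eq0 -lt0n fact_gt0.
have [m ->] : exists m, n = (t + m.+2)%N by exists (n - t.+2)%N; lia.
have -> : (t + m.+2 - t - 1 = m.+1)%N by lia.
have -> : (t + m.+2 - t.+1 = m.+1)%N by lia.
rewrite subn1 !mulrA -!natrM.
have -> : (t.+1 * (t`! * (m.+1)`!) = m.+1 * ((t.+1)`! * m`!))%N.
  by rewrite [(m.+1)`!]factS [(t.+1)`!]factS; lia.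
by rewrite subrr subr0.
Qed.

Lemma sum_weight_setU1 f i :
  \sum_(S : {set 'I_n} | i \notin S) shapley_weight #|S| * f (i |: S) =
  \sum_(T : {set 'I_n} | i \in T) shapley_weight #|T|.-1 * f T.
Proof.
rewrite -(sum_setU1 i (fun T => shapley_weight #|T|.-1 * f T)).
by apply: eq_bigr => S iS; rewrite cardsU1 iS.
Qed.

Lemma shapley_efficient f : \sum_i shapley f i = f setT - f set0.
Proof.
have shapleyE i : shapley f i =
    \sum_(T : {set 'I_n} | i \in T) shapley_weight #|T|.-1 * f T
  - \sum_(S : {set 'I_n} | i \notin S) shapley_weight #|S| * f S.
  by rewrite -sum_weight_setU1 -sumrB; apply: eq_bigr => S _; rewrite mulrBr.
have members : \sum_i \sum_(T : {set 'I_n} | i \in T) shapley_weight #|T|.-1 * f T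
    = \sum_(T : {set 'I_n}) (#|T|%:R * shapley_weight #|T|.-1) * f T.
  rewrite (exchange_big_dep predT) //=; apply: eq_bigr => T _.
  by rewrite sumr_const -mulrA mulr_natl; congr (_ *+ _); apply: eq_card.
have outsiders : \sum_i \sum_(S : {set 'I_n} | i \notin S) shapley_weight #|S| * f S
    = \sum_(T : {set 'I_n}) ((n - #|T|)%:R * shapley_weight #|T|) * f T.
  rewrite (exchange_big_dep predT) //=; apply: eq_bigr => T _.
  rewrite sumr_const -mulrA mulr_natl; congr (_ *+ _).
  have complT := cardsC T; rewrite card_ord in complT.
  have -> : (n - #|T| = #|~: T|)%N by lia.
  by apply: eq_card => x; rewrite !inE.
under eq_bigr do rewrite shapleyE.
rewrite sumrB members outsiders -sumrB.
rewrite (eq_bigr (fun T => (T == setT)%:R * f T - (T == set0)%:R * f T)).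
  by rewrite sumrB !sum_indicator_mul.
move=> T _.
have Tn : (#|T| <= n)%N by have := max_card (mem T); rewrite card_ord.
rewrite -!mulrBl shapley_weight_telescope // cards_eq0.
have fullT : (T == setT) = (#|T| == n).
  by rewrite eqEcard subsetT cardsT card_ord eqn_leq Tn.
by rewrite fullT.
Qed.

Lemma eq_shapley f f' i : f =1 f' -> shapley f i = shapley f' i.
Proof. by move=> ff'; apply: eq_bigr => S _; rewrite !ff'. Qed.

Lemma shapleyD f f' i :
  shapley (fun S => f S + f' S) i = shapley f i + shapley f' i.
Proof.
rewrite -big_split /=; apply: eq_bigr => S _.
by rewrite -mulrDr addrACA opprD.
Qed.

Lemma shapley_dummy f i : (forall S, f (i |: S) = f S) -> shapley f i = 0.
Proof. by move=> dummy; apply: big1 => S _; rewrite dummy subrr mulr0. Qed.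

End Shapley.

Section Networks.
Variable n : nat.
Implicit Types (g h c E : network n) (l : link n) (i j : 'I_n).

Lemma link_nonempty l : exists x, x \in val l.
Proof.
have := valP l; case: (set_0Vmem (val l)) => [->|[x xl]]; last by exists x.
by rewrite cards0.
Qed.

Lemma NplayersP h i :
  reflect (exists2 l, l \in h & i \in val l) (i \in Nplayers h).
Proof. exact: bigcupP. Qed.

Lemma NplayersS c h : c \subset h -> {subset Nplayers c <= Nplayers h}.
Proof.
move=> ch i /NplayersP[l lc il]; apply/NplayersP; exists l => //.
exact: (subsetP ch).
Qed.

Lemma adj_sym h : symmetric (adj h).
Proof.
move=> x y; apply/existsP/existsP => -[l /andP[lh /andP[xl yl]]].
  by exists l; rewrite lh xl yl.
by exists l; rewrite lh xl yl.
Qed.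

Definition link_closed g h :=
  forall i l, i \in Nplayers h -> l \in g -> i \in val l -> l \in h.

Lemma component_sub E h : h \in components E -> h \subset E.
Proof. by rewrite inE => /and4P[]. Qed.

Lemma component_link_closed E h : h \in components E -> link_closed E h.
Proof.
rewrite inE => /and4P[_ _ _ /forallP cl] i l iN lE il.
by apply: (implyP (forallP (cl i) l)); rewrite iN lE il.
Qed.

Lemma component_connect E h i j : h \in components E ->
  i \in Nplayers h -> j \in Nplayers h -> connect (adj h) i j.
Proof.
rewrite inE => /and4P[_ _ /forallP conn _] iN jN.
by apply: (implyP (forallP (conn i) j)); rewrite iN jN.
Qed.

Lemma component_const (T : eqType) E h (f : 'I_n -> T) :
  h \in components E ->
  (forall l, l \in h -> {in val l &, forall x y, f x = f y}) ->
  {in Nplayers h &, forall i j, f i = f j}.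
Proof.
move=> hE fl i j iN jN.
have clos : closed (adj h) [pred x | f x == f i].
  apply: intro_closed; first exact: sym_connect_sym (@adj_sym h).
  move=> a b /existsP[l /andP[lh /andP[al bl]]] /eqP <-.
  by apply/eqP; apply: (fl l).
have := closed_connect clos (component_connect hE iN jN).
by rewrite !inE eqxx => /esym/eqP.
Qed.

Lemma link_closedD g h : link_closed g h -> link_closed g (g :\: h).
Proof.
move=> clh i l /NplayersP[m]; rewrite inE => /andP[mh mg] im lg il.
rewrite inE lg andbT; apply: contraNN mh => lh.
by apply: (clh i) => //; apply/NplayersP; exists l.
Qed.

Lemma components_link_closed g h c : h \subset g -> link_closed g h ->
  (c \in components h) = (c \in components g) && (c \subset h).
Proof.
move=> hg clh; rewrite !inE /is_component.
apply/idP/idP => [/and4P[ne ch conn /forallP cl]|].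
  rewrite ch andbT; apply/and4P; split => //; first exact: subset_trans ch hg.
  apply/forallP => i; apply/forallP => l; apply/implyP => /and3P[iN lg il].
  have lh : l \in h by apply: (clh i) => //; apply: NplayersS iN.
  by apply: (implyP (forallP (cl i) l)); rewrite iN lh il.
move=> /andP[/and4P[ne cg conn /forallP cl] ch]; apply/and4P; split => //.
apply/forallP => i; apply/forallP => l; apply/implyP => /and3P[iN lh il].
by apply: (implyP (forallP (cl i) l)); rewrite iN (subsetP hg) ?il.
Qed.

Lemma component_sub_link_closed g h c l : c \in components g ->
  link_closed g h -> l \in c -> l \in h -> c \subset h.
Proof.
move=> cg clh lc lh; apply/subsetP => m mc.
have [x xl] := link_nonempty l; have [y ym] := link_nonempty m.
have inNh : {in Nplayers c &, forall x y, (x \in Nplayers h) = (y \in Nplayers h)}.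
  apply: (component_const cg) => k kc a b ak bk.
  have k_of_h z : z \in val k -> z \in Nplayers h -> k \in h.
    by move=> zk zN; apply: (clh z) => //; apply: (subsetP (component_sub cg)).
  apply/idP/idP => [/(k_of_h a ak) kh|/(k_of_h b bk) kh]; apply/NplayersP; by exists k.
have xNc : x \in Nplayers c by apply/NplayersP; exists l.
have yNc : y \in Nplayers c by apply/NplayersP; exists m.
have yNh : y \in Nplayers h.
  by rewrite -(inNh x y xNc yNc); apply/NplayersP; exists l.
by apply: (clh y) => //; apply: (subsetP (component_sub cg)).
Qed.

Lemma adj_link h l x y : l \in h -> x \in val l -> y \in val l -> adj h x y.
Proof. by move=> lh xl yl; apply/existsP; exists l; rewrite lh xl yl. Qed.

Definition component_at E i : network n :=
  [set l in E | [exists k, (k \in val l) && connect (adj E) i k]].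

Lemma connect_component_at E i j :
  connect (adj E) i j -> connect (adj (component_at E i)) i j.
Proof.
set h := component_at E i => cij.
have clos : closed (adj E) [pred y | connect (adj E) i y && connect (adj h) i y].
  apply: intro_closed; first exact: sym_connect_sym (@adj_sym E).
  move=> a b /existsP[m /andP[mE /andP[am bm]]] /andP[cEa cha].
  have mh : m \in h by rewrite inE mE; apply/existsP; exists a; rewrite am cEa.
  by rewrite !inE (connect_trans cEa (connect1 (adj_link mE am bm)))
             (connect_trans cha (connect1 (adj_link mh am bm))).
by have := closed_connect clos cij; rewrite !inE !connect0 => /esym/andP[].
Qed.

Lemma Nplayers_component_at E i j :
  j \in Nplayers (component_at E i) -> connect (adj E) i j.
Proof.
move=> /NplayersP[l]; rewrite inE => /andP[lE /existsP[k /andP[kl ck]]] jl.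
exact: connect_trans ck (connect1 (adj_link lE kl jl)).
Qed.

Lemma component_atP E i : i \in Nplayers E ->
  component_at E i \in components E /\ i \in Nplayers (component_at E i).
Proof.
move=> /NplayersP[l0 l0E il0]; set h := component_at E i.
have l0h : l0 \in h by rewrite inE l0E; apply/existsP; exists i; rewrite il0 connect0.
split; last by apply/NplayersP; exists l0.
rewrite inE; apply/and4P; split.
- by apply/set0Pn; exists l0.
- by apply/subsetP => l; rewrite inE => /andP[].
- apply/forallP => j; apply/forallP => k; apply/implyP => /andP[jN kN].
  apply: (connect_trans (y := i)).
    by rewrite (sym_connect_sym (@adj_sym h)) connect_component_at ?Nplayers_component_at.
  by rewrite connect_component_at ?Nplayers_component_at.
- apply/forallP => j; apply/forallP => l; apply/implyP => /and3P[jN lE jl].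
  by rewrite inE lE; apply/existsP; exists j; rewrite jl Nplayers_component_at.
Qed.

End Networks.

Section Restriction.
Variable n : nat.
Implicit Types (g h : network n) (l : link n) (X : {set 'I_n}).

Lemma restrS_isolated g i X :
  (forall l, l \in g -> i \notin val l) -> restrS g (i |: X) = restrS g X.
Proof.
move=> iso; apply/setP => l; rewrite !inE; case lg: (l \in g) => //=.
apply/subsetP/subsetP => sub x xl; last by rewrite inE sub ?orbT.
have := sub x xl; rewrite !inE => /orP[/eqP ex|//].
by have := iso l lg; rewrite -ex xl.
Qed.

Lemma restrSI g h X : restrS g X :&: h = restrS (g :&: h) X.
Proof. by apply/setP => l; rewrite !inE andbAC. Qed.

Lemma restrSD g h X : restrS g X :\: h = restrS (g :\: h) X.
Proof. by apply/setP => l; rewrite !inE andbA. Qed.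

Lemma restrST g : restrS g setT = g.
Proof. by apply/setP => l; rewrite !inE subsetT andbT. Qed.

Lemma restrS0 g : restrS g set0 = set0.
Proof.
apply/setP => l; rewrite !inE; apply/negbTE/negP => /andP[_].
have [x xl] := link_nonempty l.
by move/subsetP/(_ x xl); rewrite inE.
Qed.

Lemma restrS_setD1 g l X : ~~ (val l \subset X) -> restrS (g :\ l) X = restrS g X.
Proof.
move=> lX; apply/setP => m; rewrite !inE.
by case: eqP => [->|_] //=; rewrite (negbTE lX) andbF.
Qed.

End Restriction.

Section Myerson.
Variables (n : nat) (R : realType) (v : network n -> R).
Hypotheses (v0 : is_game v) (vCA : component_additive v).
Implicit Types (g h E : network n) (l : link n) (i : 'I_n).

Lemma myerson_shapley g i : myerson v g i = shapley (fun S => v (restrS g S)) i.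
Proof. by []. Qed.

Lemma component_additive_split g h : h \subset g -> link_closed g h ->
  v g = v h + v (g :\: h).
Proof.
move=> hg clh.
rewrite (vCA g) (vCA h) (vCA (g :\: h)) (bigID (fun c : network n => c \subset h)) /=.
congr (_ + _); apply: eq_bigl => c; first by rewrite (components_link_closed _ hg clh).
rewrite (components_link_closed _ (subsetDl g h) (link_closedD clh)).
have [cg|//] /= := boolP (c \in components g).
have [l lc] : exists l, l \in c.
  by move: cg; rewrite inE => /and4P[/set0Pn].
apply/idP/idP => [nch|cgh]; last first.
  apply/negP => /subsetP/(_ l lc).
  by have := subsetP cgh l lc; rewrite inE => /andP[/negbTE->].
apply/subsetP => m mc; rewrite inE (subsetP (component_sub cg) m mc) andbT.
by apply: contraNN nch => mh; apply: (component_sub_link_closed cg clh mc mh).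
Qed.

Lemma myerson_isolated g i : i \notin Nplayers g -> myerson v g i = 0.
Proof.
move=> iN; apply: shapley_dummy => S; rewrite restrS_isolated // => l lg.
by apply: contra iN => il; apply/NplayersP; exists l.
Qed.

Lemma myerson_efficient g : \sum_i myerson v g i = v g.
Proof. by rewrite shapley_efficient restrST restrS0 v0 subr0. Qed.

Lemma link_closed_restrS g h X :
  link_closed g h -> link_closed (restrS g X) (restrS g X :&: h).
Proof.
move=> clh i l iN lgX il; rewrite inE lgX /=.
apply: (clh i) => //; first exact: NplayersS (subsetIr _ _) _ iN.
by move: lgX; rewrite inE => /andP[].
Qed.

Lemma myerson_split g h i : link_closed g h ->
  myerson v g i = myerson v (g :&: h) i + myerson v (g :\: h) i.
Proof.
move=> clh; rewrite !myerson_shapley -shapleyD; apply: eq_shapley => X /=.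
rewrite -restrSI -restrSD.
rewrite (component_additive_split (subsetIl _ h) (link_closed_restrS (X := X) clh)).
by rewrite setDIr setDv set0U.
Qed.

Lemma myerson_component E g h : g \subset E -> h \in components E ->
  \sum_(i in Nplayers h) myerson v g i = v (g :&: h).
Proof.
move=> gE hE.
have clh : link_closed g h.
  by move=> i l iN lg il; apply: (component_link_closed hE iN) (subsetP gE l lg) il.
rewrite -myerson_efficient [RHS](bigID (mem (Nplayers h))) /=.
rewrite [X in _ + X]big1 ?addr0 => [|i iN]; last first.
  by apply: myerson_isolated; apply: contra iN; apply: NplayersS (subsetIr _ _) _.
apply: eq_bigr => i iN.
rewrite (myerson_split _ clh) [X in _ + X]myerson_isolated ?addr0 //.
apply/NplayersP => -[l]; rewrite inE => /andP[/negP lh lg] il.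
exact/lh/(clh i).
Qed.

Lemma myerson_delete_link g l i : i \in val l ->
  myerson v g i - myerson v (g :\ l) i =
  \sum_(T : {set 'I_n} | val l \subset T)
     shapley_weight n R #|T|.-1 * (v (restrS g T) - v (restrS (g :\ l) T)).
Proof.
move=> il; rewrite !myerson_shapley /shapley -sumrB.
transitivity (\sum_(S : {set 'I_n} | i \notin S) shapley_weight n R #|S| *
   (v (restrS g (i |: S)) - v (restrS (g :\ l) (i |: S)))).
  apply: eq_bigr => S iS; rewrite [restrS (g :\ l) S]restrS_setD1; last first.
    by apply: contra iS => /subsetP; apply.
  by rewrite -mulrBr opprB addrA subrK.
rewrite (sum_weight_setU1 (fun T => v (restrS g T) - v (restrS (g :\ l) T))).
rewrite big_mkcond [RHS]big_mkcond /=; apply: eq_bigr => T _.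
have [lT|lT] := boolP (val l \subset T); first by rewrite (subsetP lT i il).
by case: (i \in T); rewrite // restrS_setD1 // subrr mulr0.
Qed.

End Myerson.

Section Formation.
Variables (n : nat) (R : realType).
Implicit Types (rho : network n -> R) (g : network n) (l : link n).

Lemma prob_eq0 rho g : is_prob rho -> ~~ (0 < rho g) -> rho g = 0.
Proof.
by move=> [ge0 _] /negbTE rho_g; apply/eqP; rewrite eq_le ge0 andbT leNgt rho_g.
Qed.

Lemma sub_extent rho g : 0 < rho g -> g \subset extent rho.
Proof. by move=> rho_g; apply: (bigcup_sup g). Qed.

Lemma minus_linkE l rho g :
  minus_link l rho g = if l \in g then 0 else rho g + rho (l |: g).
Proof.
rewrite /minus_link /restr_prob setCK subsetC sub1set inE.
by case: (l \in g) => //=; rewrite sum_subset1 setU0 setUC.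
Qed.

Lemma sum_minus_link l rho (F : network n -> R) :
  \sum_(g : network n) minus_link l rho g * F g =
  \sum_(g : network n | l \in g) rho g * F (g :\ l)
  + \sum_(g : network n | l \notin g) rho g * F g.
Proof.
rewrite (bigID (fun g : network n => l \in g)) /= big1 => [|g lg]; last first.
  by rewrite minus_linkE lg mul0r.
rewrite add0r -(sum_setU1 l (fun g => rho g * F (g :\ l))) addrC -big_split /=.
by apply: eq_bigr => g lg; rewrite minus_linkE (negbTE lg) mulrDl setU1K.
Qed.

Lemma minus_link_prob l rho : is_prob rho -> is_prob (minus_link l rho).
Proof.
move=> [ge0 sum1]; split => [g|].
  by rewrite minus_linkE; case: (l \in g); rewrite ?addr_ge0.
have := sum_minus_link l rho (fun _ => 1).
rewrite !(eq_bigr _ (fun g _ => mulr1 _)) => ->.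
by rewrite -sum1 [RHS](bigID (fun g : network n => l \in g)).
Qed.

Lemma minus_link_extent l rho :
  is_prob rho -> extent (minus_link l rho) \subset extent rho :\ l.
Proof.
move=> P; apply/subsetP => m /bigcupP[g]; rewrite minus_linkE.
case: ifPn => [_|lg rho_g mg]; first by rewrite ltxx.
rewrite !inE; apply/andP; split; first by apply: contraNneq lg => <-.
have [pg|npg] := boolP (0 < rho g); first exact: (subsetP (sub_extent pg)).
have pl : 0 < rho (l |: g) by rewrite (prob_eq0 P npg) add0r in rho_g.
by apply: (subsetP (sub_extent pl)); rewrite inE mg orbT.
Qed.

End Formation.

Section ExpectedMyerson.
Variables (n : nat) (R : realType).
Implicit Types (v rho : network n -> R).

Lemma exp_myerson_alloc : is_allocation_rule (@exp_myerson n R).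
Proof.
move=> v rho _ P i; rewrite inE => iN; apply: big1 => g _.
have [pg|npg] := boolP (0 < rho g); last by rewrite (prob_eq0 P npg) mul0r.
rewrite myerson_isolated ?mulr0 //; apply: contra iN.
exact: NplayersS (sub_extent pg) i.
Qed.

Lemma exp_myerson_balanced v rho :
  inD v rho -> component_balanced_on (@exp_myerson n R) v rho.
Proof.
move=> [v0 vCA P] h hE; rewrite exchange_big [RHS]big_mkcond /=.
apply: eq_bigr => g _; rewrite -mulr_sumr.
have [pg|npg] := boolP (0 < rho g); last by rewrite (prob_eq0 P npg) mul0r.
by rewrite (myerson_component v0 vCA (sub_extent pg) hE).
Qed.

Lemma exp_myerson_bargaining v rho :
  equal_bargaining_on (@exp_myerson n R) v rho.
Proof.
move=> l _ i j il jl.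
suff loss k : k \in val l ->
    exp_myerson v rho k - exp_myerson v (minus_link l rho) k =
    \sum_(g : network n | l \in g) rho g *
      \sum_(T : {set 'I_n} | val l \subset T) shapley_weight n R #|T|.-1 *
        (v (restrS g T) - v (restrS (g :\ l) T)).
  by rewrite !loss.
move=> kl; rewrite /exp_myerson sum_minus_link (bigID (fun g : network n => l \in g)) /=.
rewrite opprD addrACA subrr addr0 -sumrB; apply: eq_bigr => g _.
by rewrite -mulrBr myerson_delete_link.
Qed.

End ExpectedMyerson.

Section Uniqueness.
Variables (n : nat) (R : realType) (Psi : alloc_type n R).
Hypothesis Psi_alloc : is_allocation_rule Psi.
Hypothesis Psi_axioms : forall v rho : network n -> R, inD v rho ->
  component_balanced_on Psi v rho /\ equal_bargaining_on Psi v rho.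

Lemma exp_myerson_unique_step (v rho : network n -> R) : inD v rho ->
  (forall l, l \in extent rho ->
     Psi v (minus_link l rho) =1 exp_myerson v (minus_link l rho)) ->
  Psi v rho =1 exp_myerson v rho.
Proof.
move=> D IH i; have [v0 _ P] := D; have [CB EBP] := Psi_axioms D.
pose Phi x := Psi v rho x - exp_myerson v rho x.
have Phi_link l : l \in extent rho -> {in val l &, forall x y, Phi x = Phi y}.
  move=> lE x y xl yl.
  have := EBP l lE x y xl yl; have := exp_myerson_bargaining v lE xl yl.
  by rewrite !IH // /Phi; lra.
apply/eqP; rewrite -subr_eq0 -/(Phi i); apply/eqP.
have [iN|iN] := boolP (i \in Nplayers (extent rho)); last first.
  have iN0 : i \in N0 (extent rho) by rewrite inE.
  by rewrite /Phi (Psi_alloc v0 P iN0) (exp_myerson_alloc v0 P iN0) subrr.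
have [hE ih] := component_atP iN; set h := component_at _ i in hE ih.
have Phi_h : {in Nplayers h, forall j, Phi j = Phi i}.
  move=> j jh; apply: (component_const hE) => // l lh.
  exact/Phi_link/(subsetP (component_sub hE)).
have : \sum_(j in Nplayers h) Phi j = 0.
  by rewrite sumrB (CB h hE) (exp_myerson_balanced D hE) subrr.
rewrite (eq_bigr _ Phi_h) sumr_const => /eqP; rewrite mulrn_eq0 cards_eq0.
by case/orP => [/eqP h0|/eqP //]; rewrite h0 inE in ih.
Qed.

Lemma exp_myerson_unique (v rho : network n -> R) :
  inD v rho -> Psi v rho =1 exp_myerson v rho.
Proof.
move: {2}#|extent rho| (leqnn #|extent rho|) => k.
elim: k rho => [|k IH] rho rhok D; apply: exp_myerson_unique_step => // l lE.
  by move: rhok; rewrite leqn0 cards_eq0 => /eqP rho0; rewrite rho0 inE in lE.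
have [v0 vCA P] := D.
apply: IH; last by split => //; apply: minus_link_prob.
rewrite (cardsD1 l) lE add1n ltnS in rhok.
exact: leq_trans (subset_leq_card (minus_link_extent l P)) rhok.
Qed.

End Uniqueness.

Theorem mainTheorem1 (R : realType) (n : nat) :
  (is_allocation_rule (@exp_myerson n R) /\
   forall v rho : network n -> R, inD v rho ->
     component_balanced_on (@exp_myerson n R) v rho /\
     equal_bargaining_on (@exp_myerson n R) v rho) /\
  (forall Psi : alloc_type n R,
     is_allocation_rule Psi ->
     (forall v rho : network n -> R, inD v rho ->
        component_balanced_on Psi v rho /\ equal_bargaining_on Psi v rho) ->
     forall v rho : network n -> R, inD v rho ->
       forall i, Psi v rho i = exp_myerson v rho i).
Proof.
split; first split.
- exact: exp_myerson_alloc.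
- by move=> v rho D; split; [exact: exp_myerson_balanced | exact: exp_myerson_bargaining].
- by move=> Psi Psi_alloc Psi_axioms v rho; apply: exp_myerson_unique.
Qed.
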